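(* Let $(\mathcal{T},\Sigma)$ be a triangulated category and let $\mathcal{C}$ be an $(n-2)$-cluster tilting subcategory of $\mathcal{T}$ (for an integer $n\ge 4$) which is closed under $\Sigma^{n-2}$, and let $(\mathcal{C},\widehat{\Sigma})$, $\widehat{\Sigma}=\Sigma^{n-2}$, be the associated $n$-angulated category. Then there is a well-defined surjective group homomorphism $K_0(\mathcal{C})\to K_0(\mathcal{T})$ sending $[A]-[B]$ (computed in $K_0(\mathcal{C})$) to $[A]-[B]$ (computed in $K_0(\mathcal{T})$) for all objects $A,B$ of $\mathcal{C}$.
   Context: All categories are small. $(\mathcal{T},\Sigma)$ is a triangulated category (suspension $\Sigma$); $K_0(\mathcal{T})$ is its Grothendieck group: the free abelian group on isomorphism classes of objects modulo $\langle X\rangle-\langle Y\rangle+\langle Z\rangle$ for every triangle $X\to Y\to Z\to\Sigma X$; $[X]$ denotes the class of $X$. A full subcategory $\mathcal{C}\subseteq\mathcal{T}$ is contravariantly (resp. covariantly) finite if every object of $\mathcal{T}$ has a right (resp. left) $\mathcal{C}$-approximation, where a right $\mathcal{C}$-approximation of $X$ is a morphism $f:C\to X$ with $C\in\mathcal{C}$ such that every morphism $C'\to X$ with $C'\in\mathcal{C}$ factors through $f$ (left approximations dually); functorially finite means both. For $t\ge 2$, $\mathcal{C}$ is $t$-cluster tilting if it is functorially finite and $\mathcal{C}=\{A\in\mathcal{T}\mid \operatorname{Hom}_{\mathcal{T}}(A,\Sigma^iC)=0\text{ for }1\le i\le t-1,\ C\in\mathcal{C}\}=\{B\in\mathcal{T}\mid\operatorname{Hom}_{\mathcal{T}}(\Sigma^iC,B)=0\text{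 for }1\le i\le t-1,\ C\in\mathcal{C}\}$. If $\mathcal{C}$ is $(n-2)$-cluster tilting and closed under $\widehat{\Sigma}=\Sigma^{n-2}$, declare a sequence $A_1\xrightarrow{\alpha_1}A_2\to\cdots\xrightarrow{\alpha_{n-1}}A_n\xrightarrow{\alpha_n}\widehat{\Sigma}A_1$ in $\mathcal{C}$ to be an $n$-angle if there exist objects $X_1,\dots,X_{n-3}$ of $\mathcal{T}$ and triangles in $\mathcal{T}$: $A_1\xrightarrow{\alpha_1}A_2\xrightarrow{f_1}X_1\xrightarrow{\partial_{n-2}}\Sigma A_1$; $X_{i-1}\xrightarrow{g_{i-1}}A_{i+1}\xrightarrow{f_i}X_i\xrightarrow{\partial_{n-1-i}}\Sigma X_{i-1}$ for $2\le i\le n-3$; and $X_{n-3}\xrightarrow{g_{n-3}}A_{n-1}\xrightarrow{\alpha_{n-1}}A_n\xrightarrow{\partial_1}\Sigma X_{n-3}$, such that $\alpha_{i+1}=g_i\circ f_i$ for $1\le i\le n-3$ and $\alpha_n=\Sigma^{n-3}\partial_{n-2}\circ\Sigma^{n-4}\partial_{n-3}\circ\cdots\circ\partial_1$. By Geiss–Keller–Oppermann, $(\mathcal{C},\widehat{\Sigma})$ with these $n$-angles is an $n$-angulated category. Grothendieck group of an $n$-angulated category $(\mathcal{C},\widehat\Sigma)$: let $F(\mathcal{C})$ be the free abelian group on the isomorphism classes $\langle A\rangle$ of objects; for an $n$-angle $A_\bullet$ put $\chi(A_\bullet)=\sum_{i=1}^n(-1)^{i+1}\langle A_i\rangle$;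 $R(\mathcal{C})$ is the subgroup generated by all $\chi(A_\bullet)$, together with $\langle 0\rangle$ when $n$ is even; $K_0(\mathcal{C})=F(\mathcal{C})/R(\mathcal{C})$ with $[A]$ the class of $\langle A\rangle$. (Every element of $K_0(\mathcal{C})$ has the form $[A]-[B]$.) *)

From mathcomp Require Import all_boot all_algebra.
From mathcomp Require Import boolp.
From Stdlib Require List.
Unset Printing Implicit Defensive.
Import GRing.Theory.
Local Open Scope ring_scope.

Record TriData := {
  Obj : Type;
  Hom : Obj -> Obj -> zmodType;
  comp : forall X Y Z : Obj, Hom Y Z -> Hom X Y -> Hom X Z;
  idm : forall X : Obj, Hom X X;
  zero_obj : Obj;
  Sig : Obj -> Obj;
  Sigm : forall X Y : Obj, Hom X Y -> Hom (Sig X) (Sig Y);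
  dist : forall X Y Z : Obj, Hom X Y -> Hom Y Z -> Hom Z (Sig X) -> Prop
}.
Arguments Hom : clear implicits.
Arguments comp {t X Y Z}.
Arguments idm {t}.
Arguments zero_obj {t}.
Arguments Sig {t}.
Arguments Sigm {t X Y}.
Arguments dist {t X Y Z}.

Section Defs.
Variable T : TriData.

Definition isIsoM (X Y : Obj T) (f : Hom T X Y) : Prop :=
  exists g : Hom T Y X, comp g f = idm X /\ comp f g = idm Y.
Arguments isIsoM {X Y}.

Definition iso (X Y : Obj T) : Prop := exists f : Hom T X Y, isIsoM f.

Record is_triangulated : Prop := {
  compA : forall (X Y Z W : Obj T) (h : Hom T Z W) (g : Hom T Y Z) (f : Hom T X Y),
      comp h (comp g f) = comp (comp h g) f;
  comp1m : forall (X Y : Obj T) (f : Hom T X Y), comp (idm Y) f = f;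
  compm1 : forall (X Y : Obj T) (f : Hom T X Y), comp f (idm X) = f;
  compDl : forall (X Y Z : Obj T) (g1 g2 : Hom T Y Z) (f : Hom T X Y),
      comp (g1 + g2) f = comp g1 f + comp g2 f;
  compDr : forall (X Y Z : Obj T) (g : Hom T Y Z) (f1 f2 : Hom T X Y),
      comp g (f1 + f2) = comp g f1 + comp g f2;
  zero_from : forall (X : Obj T) (f : Hom T zero_obj X), f = 0;
  zero_to : forall (X : Obj T) (f : Hom T X zero_obj), f = 0;
  biprod : forall X Y : Obj T, exists (P : Obj T) (i1 : Hom T X P) (i2 : Hom T Y P)
      (p1 : Hom T P X) (p2 : Hom T P Y),
      [/\ comp p1 i1 = idm X, comp p2 i2 = idm Y, comp p1 i2 = 0, comp p2 i1 = 0
        & comp i1 p1 + comp i2 p2 = idm P];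
  Sigm1 : forall X : Obj T, Sigm (idm X) = idm (Sig X);
  SigmM : forall (X Y Z : Obj T) (g : Hom T Y Z) (f : Hom T X Y),
      Sigm (comp g f) = comp (Sigm g) (Sigm f);
  SigmD : forall (X Y : Obj T) (f1 f2 : Hom T X Y), Sigm (f1 + f2) = Sigm f1 + Sigm f2;
  Sigm_inj : forall X Y : Obj T, injective (@Sigm T X Y);
  Sigm_surj : forall (X Y : Obj T) (g : Hom T (Sig X) (Sig Y)), exists f, Sigm f = g;
  Sig_ess : forall Y : Obj T, exists X, iso (Sig X) Y;
  TR1_iso : forall (X Y Z X' Y' Z' : Obj T)
      (f : Hom T X Y) (g : Hom T Y Z) (h : Hom T Z (Sig X))
      (f' : Hom T X' Y') (g' : Hom T Y' Z') (h' : Hom T Z' (Sig X'))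
      (a : Hom T X X') (b : Hom T Y Y') (c : Hom T Z Z'),
      isIsoM a -> isIsoM b -> isIsoM c ->
      comp b f = comp f' a -> comp c g = comp g' b -> comp (Sigm a) h = comp h' c ->
      dist f g h -> dist f' g' h';
  TR1_id : forall X : Obj T,
      dist (idm X) (0 : Hom T X zero_obj) (0 : Hom T zero_obj (Sig X));
  TR1_ext : forall (X Y : Obj T) (f : Hom T X Y),
      exists (Z : Obj T) (g : Hom T Y Z) (h : Hom T Z (Sig X)), dist f g h;
  TR2 : forall (X Y Z : Obj T) (f : Hom T X Y) (g : Hom T Y Z) (h : Hom T Z (Sig X)),
      dist f g h <-> dist g h (- Sigm f);
  TR3 : forall (X Y Z X' Y' Z' : Obj T)
      (f : Hom T X Y) (g : Hom T Y Z) (h : Hom T Z (Sig X))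
      (f' : Hom T X' Y') (g' : Hom T Y' Z') (h' : Hom T Z' (Sig X'))
      (a : Hom T X X') (b : Hom T Y Y'),
      dist f g h -> dist f' g' h' -> comp b f = comp f' a ->
      exists c : Hom T Z Z', comp c g = comp g' b /\ comp (Sigm a) h = comp h' c;
  TR4 : forall (X Y Z Q1 Q2 Q3 : Obj T) (f : Hom T X Y) (g : Hom T Y Z)
      (p1 : Hom T Y Q1) (d1 : Hom T Q1 (Sig X))
      (p2 : Hom T Z Q2) (d2 : Hom T Q2 (Sig X))
      (p3 : Hom T Z Q3) (d3 : Hom T Q3 (Sig Y)),
      dist f p1 d1 -> dist (comp g f) p2 d2 -> dist g p3 d3 ->
      exists (a : Hom T Q1 Q2) (b : Hom T Q2 Q3),
      [/\ dist a b (comp (Sigm p1) d3),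
          comp a p1 = comp p2 g, comp d2 a = d1,
          comp b p2 = p3 & comp d3 b = comp (Sigm f) d2]
}.

Definition SigN (i : nat) (X : Obj T) : Obj T := iter i (@Sig T) X.

Definition right_approx (C : Obj T -> Prop) (X : Obj T) : Prop :=
  exists (C0 : Obj T) (f : Hom T C0 X), C C0 /\
    forall (C' : Obj T) (g : Hom T C' X), C C' -> exists h : Hom T C' C0, comp f h = g.

Definition left_approx (C : Obj T -> Prop) (X : Obj T) : Prop :=
  exists (C0 : Obj T) (f : Hom T X C0), C C0 /\
    forall (C' : Obj T) (g : Hom T X C'), C C' -> exists h : Hom T C0 C', comp h f = g.

Definition contravariantly_finite (C : Obj T -> Prop) : Prop :=
  forall X : Obj T, right_approx C X.
Definition covariantly_finite (C : Obj T -> Prop) : Prop :=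
  forall X : Obj T, left_approx C X.
Definition functorially_finite (C : Obj T -> Prop) : Prop :=
  contravariantly_finite C /\ covariantly_finite C.

Definition cluster_tilting (t : nat) (C : Obj T -> Prop) : Prop :=
  [/\ functorially_finite C,
      (forall A : Obj T, C A <->
         (forall (i : nat), (1 <= i <= t - 1)%N -> forall (X : Obj T), C X ->
            forall f : Hom T A (SigN i X), f = 0))
    & (forall B : Obj T, C B <->
         (forall (i : nat), (1 <= i <= t - 1)%N -> forall (X : Obj T), C X ->
            forall f : Hom T (SigN i X) B, f = 0))].

(* The composite  Sig^{j} d_first o Sig^{j-1} d_1 o ... o d_j  :
   X_{j+1} -> Sig^{j+1} A_1, built recursively by E_{j+1} = Sig(E_j) o d_{j+1}. *)
Fixpoint Ecomp (A1 : Obj T) (X : nat -> Obj T) (e : Hom T (X 1%N) (Sig A1))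
    (d : forall j : nat, Hom T (X j.+1) (Sig (X j))) (j : nat)
    : Hom T (X j.+1) (iter j.+1 (@Sig T) A1) :=
  match j return Hom T (X j.+1) (iter j.+1 (@Sig T) A1) with
  | 0 => e
  | j'.+1 => comp (Sigm (Ecomp A1 X e d j')) (d j'.+1)
  end.

(* A_1 -a_1-> A_2 -> ... -a_{n-1}-> A_n -alast-> Sig^{n-2} A_1  (n = k+4,
   objects indexed 1..n) is an n-angle.  In the notation of the paper:
   X_i = X i, f_i = f i, g_i = g i, partial_{n-2} = e,
   partial_{n-1-i} = d (i-1) for 2 <= i <= n-3, partial_1 = dl. *)
Definition nangle_k (k : nat) (A : nat -> Obj T) (alpha : forall i : nat, Hom T (A i) (A i.+1))
    (alast : Hom T (A k.+4) (iter k.+2 (@Sig T) (A 1%N))) : Prop :=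
  exists (X : nat -> Obj T) (f : forall i : nat, Hom T (A i.+1) (X i))
         (g : forall i : nat, Hom T (X i) (A i.+2)) (e : Hom T (X 1%N) (Sig (A 1%N)))
         (d : forall j : nat, Hom T (X j.+1) (Sig (X j))) (dl : Hom T (A k.+4) (Sig (X k.+1))),
  [/\ dist (alpha 1%N) (f 1%N) e,
      (forall j : nat, (1 <= j <= k)%N -> dist (g j) (f j.+1) (d j)),
      dist (g k.+1) (alpha k.+3) dl,
      (forall i : nat, (1 <= i <= k.+1)%N -> alpha i.+1 = comp (g i) (f i))
    & alast = comp (Sigm (Ecomp (A 1%N) X e d k)) dl].

(* An element of the free abelian group on isomorphism classes is
   represented by a finite formal sum  sum_i c_i <X_i>; two formal sums
   represent the same element iff they have the same coefficient on every
   isomorphism class. *)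
Definition fsum := seq (int * Obj T).

Definition coeff (s : fsum) (Y : Obj T) : int :=
  \sum_(p <- s) (if asbool (iso p.2 Y) then p.1 else 0).

Definition fneg (s : fsum) : fsum := [seq (- p.1, p.2) | p <- s].

Definition all_in (C : Obj T -> Prop) (s : fsum) : Prop :=
  forall p, List.In p s -> C p.2.

Inductive RT : fsum -> Prop :=
  | RT_gen (X Y Z : Obj T) (f : Hom T X Y) (g : Hom T Y Z) (h : Hom T Z (Sig X)) :
      dist f g h -> RT [:: (1, X); (-1, Y); (1, Z)]
  | RT_nil : RT [::]
  | RT_cat s1 s2 : RT s1 -> RT s2 -> RT (s1 ++ s2)
  | RT_opp s : RT s -> RT (fneg s)
  | RT_ext s s' : coeff s =1 coeff s' -> RT s -> RT s'.

Definition chi (k : nat) (A : nat -> Obj T) : fsum :=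
  [seq ((-1) ^+ i.+1, A i) | i <- iota 1 k.+4].

Inductive RC (C : Obj T -> Prop) (n : nat) : fsum -> Prop :=
  | RC_gen (A : nat -> Obj T) (alpha : forall i : nat, Hom T (A i) (A i.+1))
      (alast : Hom T (A (n - 4)%N.+4) (iter (n - 4)%N.+2 (@Sig T) (A 1%N))) :
      (forall i : nat, (1 <= i <= (n - 4)%N.+4)%N -> C (A i)) ->
      nangle_k (n - 4)%N A alpha alast -> RC C n (chi (n - 4)%N A)
  | RC_zero : ~~ odd n -> RC C n [:: (1, zero_obj)]
  | RC_nil : RC C n [::]
  | RC_cat s1 s2 : RC C n s1 -> RC C n s2 -> RC C n (s1 ++ s2)
  | RC_opp s : RC C n s -> RC C n (fneg s)
  | RC_ext s s' : coeff s =1 coeff s' -> RC C n s -> RC C n s'.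

Definition K0T_eq (s s' : fsum) : Prop := RT (s ++ fneg s').
Definition K0C_eq (C : Obj T -> Prop) (n : nat) (s s' : fsum) : Prop :=
  RC C n (s ++ fneg s').

End Defs.

Arguments isIsoM {T X Y}.
Arguments iso {T}.
Arguments SigN {T}.
Arguments right_approx {T}.
Arguments left_approx {T}.
Arguments contravariantly_finite {T}.
Arguments covariantly_finite {T}.
Arguments functorially_finite {T}.
Arguments cluster_tilting {T}.
Arguments Ecomp {T}.
Arguments nangle_k {T}.
Arguments coeff {T}.
Arguments fneg {T}.
Arguments all_in {T}.
Arguments chi {T}.
Arguments K0T_eq {T}.
Arguments K0C_eq {T}.

From Pilot Require Import Defs.
From mathcomp Require Import all_boot all_algebra.
From mathcomp Require Import boolp ring zify.
Import GRing.Theory.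
Set Implicit Arguments.
Unset Strict Implicit.
Local Open Scope ring_scope.

(* The map is induced by the identity on formal sums: an n-angle in C is
   spliced from n-2 triangles of T, so its Euler characteristic is an
   alternating sum of relations of K_0(T).  For surjectivity, resolve an
   arbitrary object X by right C-approximations: completing
   C_0 -> X to a triangle X_1 -> C_0 -> X -> Sigma X_1 and repeating,
   Hom(C, Sigma^j X_m) vanishes for 1 <= j <= m, so after n-3 steps X_m lies
   in C and [X] is an alternating sum of classes of objects of C. *)

Section Triangulated.
Variable T : TriData.
Hypothesis HT : is_triangulated T.

Local Notation Hom := (Defs.Hom T).
Local Notation comp := Defs.comp.

Lemma compm0 (X Y Z : Obj T) (g : Hom Y Z) : comp g (0 : Hom X Y) = 0.
Proof. by apply: (@addrI _ (comp g 0)); rewrite -(compDr _ HT) !addr0. Qed.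

Lemma comp0m (X Y Z : Obj T) (f : Hom X Y) : comp (0 : Hom Y Z) f = 0.
Proof. by apply: (@addrI _ (comp 0 f)); rewrite -(compDl _ HT) !addr0. Qed.

Lemma compmN (X Y Z : Obj T) (g : Hom Y Z) (f : Hom X Y) :
  comp g (- f) = - comp g f.
Proof. by apply: (@addrI _ (comp g f)); rewrite -(compDr _ HT) !subrr compm0. Qed.

Lemma compNm (X Y Z : Obj T) (g : Hom Y Z) (f : Hom X Y) :
  comp (- g) f = - comp g f.
Proof. by apply: (@addrI _ (comp g f)); rewrite -(compDl _ HT) !subrr comp0m. Qed.

Lemma Sigm0 (X Y : Obj T) : Sigm (0 : Hom X Y) = 0.
Proof. by apply: (@addrI _ (Sigm 0)); rewrite -(SigmD _ HT) !addr0. Qed.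

Lemma SigmN (X Y : Obj T) (f : Hom X Y) : Sigm (- f) = - Sigm f.
Proof. by apply: (@addrI _ (Sigm f)); rewrite -(SigmD _ HT) !subrr Sigm0. Qed.

Fixpoint Sigm_iter (k : nat) {X Y : Obj T} (f : Hom X Y) : Hom (SigN k X) (SigN k Y) :=
  match k return Hom (SigN k X) (SigN k Y) with
  | 0 => f
  | k'.+1 => Sigm (Sigm_iter k' f)
  end.

Lemma Sigm_iter_inj (k : nat) (X Y : Obj T) : injective (@Sigm_iter k X Y).
Proof. by elim: k => [//|k IH] f g /= /(Sigm_inj _ HT) /IH. Qed.

Lemma Sigm_iter0 (k : nat) (X Y : Obj T) : Sigm_iter k (0 : Hom X Y) = 0.
Proof. by elim: k => [//|k /= ->]; exact: Sigm0. Qed.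

Section Triangle.
Variables (X Y Z : Obj T) (f : Hom X Y) (g : Hom Y Z) (h : Hom Z (Sig X)).
Hypothesis tri : dist f g h.

Lemma dist_rot : dist g h (- Sigm f).
Proof. exact: (TR2 _ HT _ _ _ _ _ _).1. Qed.

Lemma dist_comp_eq0 : comp g f = 0.
Proof.
have [c [<- _]] := TR3 _ HT _ _ _ _ _ _ _ _ _ _ _ _ (idm X) f
  (TR1_id _ HT X) tri (erefl (comp f (idm X))).
exact: compm0.
Qed.

(* Compare the rotated trivial triangle on W with the rotation of [f, g, h]
   via TR3, then use that Sig is full and faithful. *)
Lemma dist_exact (W : Obj T) (u : Hom W Y) :
  comp g u = 0 -> exists v : Hom W X, comp f v = u.
Proof.
move=> gu0.
have [c [_]] := TR3 _ HT _ _ _ _ _ _ _ _ _ _ _ _ u 0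
  ((TR2 _ HT _ _ _ _ _ _).1 (TR1_id _ HT W)) dist_rot
  (etrans (comp0m _ _) (esym gu0)).
rewrite compmN compNm (Sigm1 _ HT) (compm1 _ HT) => /oppr_inj.
have [v <-] := Sigm_surj _ HT _ _ c.
by rewrite -(SigmM _ HT) => /(Sigm_inj _ HT) fv; exists v.
Qed.

Lemma dist_Sig : dist (- Sigm f) (- Sigm g) (- Sigm h).
Proof. by do 3 apply: (TR2 _ HT _ _ _ _ _ _).1. Qed.

End Triangle.

Lemma dist_SigN (X Y Z : Obj T) (f : Hom X Y) (g : Hom Y Z) (h : Hom Z (Sig X))
    (j : nat) : dist f g h ->
  exists (f' : Hom (SigN j X) (SigN j Y)) (g' : Hom (SigN j Y) (SigN j Z))
         (h' : Hom (SigN j Z) (Sig (SigN j X))), dist f' g' h'.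
Proof.
move=> tri; elim: j => [|j [f' [g' [h' /dist_Sig tri']]]]; first by exists f, g, h.
by exists (- Sigm f'), (- Sigm g'), (- Sigm h').
Qed.

Lemma dist_Hom_SigN_eq0 (X Y Z W : Obj T) (f : Hom X Y) (g : Hom Y Z)
    (h : Hom Z (Sig X)) (j : nat) : dist f g h ->
  (forall w : Hom W (SigN j Z), w = 0) ->
  (forall w : Hom W (SigN j.+1 Y), w = 0) ->
  forall w : Hom W (SigN j.+1 X), w = 0.
Proof.
move=> tri Z0 Y0 w.
have [f' [g' [h' /dist_rot tri']]] := dist_SigN j tri.
have [v <-] := dist_exact (dist_rot tri') (Y0 (comp (- Sigm f') w)).
by rewrite (Z0 v) compm0.
Qed.

Lemma isIsoM_idm (X : Obj T) : isIsoM (idm X).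
Proof. by exists (idm X); rewrite (comp1m _ HT). Qed.

(* TR1 only completes a morphism to the right; rotating backwards uses that
   Sig is essentially surjective and full. *)
Lemma dist_extL (X Y : Obj T) (f : Hom X Y) :
  exists (Z : Obj T) (p : Hom Z X) (r : Hom Y (Sig Z)), dist p f r.
Proof.
have [Z' [g [h tri]]] := TR1_ext _ HT _ _ f.
have [Z [a [b [ba ab]]]] := Sig_ess _ HT Z'.
have tri' : dist f (comp b g) (comp h a).
  apply: (TR1_iso _ HT _ _ _ _ _ _ _ _ _ _ _ _ _ _ _
    (isIsoM_idm _) (isIsoM_idm _) (ex_intro _ a (conj ab ba)) _ _ _ tri).
  - by rewrite (comp1m _ HT) (compm1 _ HT).
  - by rewrite (compm1 _ HT).
  - by rewrite (Sigm1 _ HT) (comp1m _ HT) -(Defs.compA _ HT) ab (compm1 _ HT).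
have [p Sp] := Sigm_surj _ HT _ _ (comp h a).
by exists Z, (- p), (comp b g); apply/(TR2 _ HT); rewrite SigmN opprK Sp.
Qed.

Definition iso_ind (X Z : Obj T) : int := if asbool (iso X Z) then 1 else 0.

Lemma coeff_nil (Z : Obj T) : coeff [::] Z = 0.
Proof. by rewrite /coeff big_nil. Qed.

Lemma coeff_cons (c : int) (X : Obj T) (s : fsum T) (Z : Obj T) :
  coeff ((c, X) :: s) Z = c * iso_ind X Z + coeff s Z.
Proof. by rewrite /coeff big_cons /iso_ind; case: asbool; rewrite ?mulr1 ?mulr0. Qed.

Lemma coeff_cat (s1 s2 : fsum T) (Z : Obj T) :
  coeff (s1 ++ s2) Z = coeff s1 Z + coeff s2 Z.
Proof. by rewrite /coeff big_cat. Qed.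

Definition fscale (c : int) (s : fsum T) : fsum T := [seq (c * p.1, p.2) | p <- s].

Lemma coeff_fscale (c : int) (s : fsum T) (Z : Obj T) :
  coeff (fscale c s) Z = c * coeff s Z.
Proof.
elim: s => [|[a X] s IH]; first by rewrite coeff_nil mulr0.
by rewrite [fscale _ _]/= !coeff_cons IH mulrDr mulrA.
Qed.

Lemma coeff_fneg (s : fsum T) (Z : Obj T) : coeff (fneg s) Z = - coeff s Z.
Proof.
have -> : fneg s = fscale (-1) s by apply: eq_map => p; rewrite mulN1r.
by rewrite coeff_fscale mulN1r.
Qed.

Lemma all_in_nil (C : Obj T -> Prop) : all_in C [::].
Proof. by []. Qed.

Lemma all_in1 (C : Obj T -> Prop) (c : int) (X : Obj T) : C X -> all_in C [:: (c, X)].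
Proof. by move=> CX p [<-|[]]. Qed.

Lemma all_in_cat (C : Obj T -> Prop) (s1 s2 : fsum T) :
  all_in C s1 -> all_in C s2 -> all_in C (s1 ++ s2).
Proof. by move=> C1 C2 p /List.in_app_iff [/C1|/C2]. Qed.

Lemma all_in_fscale (C : Obj T -> Prop) (c : int) (s : fsum T) :
  all_in C s -> all_in C (fscale c s).
Proof. by move=> Cs _ /List.in_map_iff [p [<- /Cs]]. Qed.

Definition relT (phi : Obj T -> int) : Prop := exists s, RT T s /\ coeff s =1 phi.

Lemma relT_coeff (s : fsum T) : relT (coeff s) <-> RT T s.
Proof. by split=> [[s' [Rs' E]]|Rs]; [apply: RT_ext Rs' | exists s]. Qed.

Lemma relT_eq (phi psi : Obj T -> int) : relT phi -> phi =1 psi -> relT psi.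
Proof. by move=> [s [Rs E]] E'; exists s; split=> // Z; rewrite E E'. Qed.

Lemma relT0 : relT (fun _ => 0).
Proof. by exists [::]; split; [exact: RT_nil | exact: coeff_nil]. Qed.

Lemma relTD (phi psi : Obj T -> int) :
  relT phi -> relT psi -> relT (fun Z => phi Z + psi Z).
Proof.
move=> [s [Rs E]] [s' [Rs' E']]; exists (s ++ s'); split; first exact: RT_cat.
by move=> Z; rewrite coeff_cat E E'.
Qed.

Lemma relTN (phi : Obj T -> int) : relT phi -> relT (fun Z => - phi Z).
Proof.
move=> [s [Rs E]]; exists (fneg s); split; first exact: RT_opp.
by move=> Z; rewrite coeff_fneg E.
Qed.

Lemma relTMn (phi : Obj T -> int) (k : nat) : relT phi -> relT (fun Z => phi Z *+ k).
Proof.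
move=> Rphi; elim: k => [|k IH]; first by apply: relT_eq relT0 _ => Z; rewrite mulr0n.
by apply: relT_eq (relTD Rphi IH) _ => Z; rewrite mulrS.
Qed.

Lemma relTZ (c : int) (phi : Obj T -> int) : relT phi -> relT (fun Z => c * phi Z).
Proof.
move=> Rphi; case: c => k.
  by apply: relT_eq (relTMn k Rphi) _ => Z; rewrite -mulr_natl natz.
by apply: relT_eq (relTN (relTMn k.+1 Rphi)) _ => Z; rewrite NegzE mulNr -mulr_natl natz.
Qed.

Lemma relT_dist (X Y Z : Obj T) (f : Hom X Y) (g : Hom Y Z) (h : Hom Z (Sig X)) :
  dist f g h -> relT (fun V => iso_ind X V - iso_ind Y V + iso_ind Z V).
Proof.
move=> tri; apply: relT_eq ((relT_coeff _).2 (RT_gen _ _ _ _ _ _ _ tri)) _ => V.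
by rewrite !coeff_cons coeff_nil !mul1r mulN1r addr0 addrA.
Qed.

Lemma coeff_chi (k : nat) (A : nat -> Obj T) (Z : Obj T) :
  coeff (chi k A) Z = \sum_(1 <= i < k.+4.+1) (-1) ^+ i.+1 * iso_ind (A i) Z.
Proof.
rewrite /coeff big_map /index_iota subn1; apply: eq_bigr => i _.
by rewrite /iso_ind; case: asbool; rewrite ?mulr1 ?mulr0.
Qed.

(* Adding (-1)^m times the m-th triangle X_m -> A_(m+2) -> X_(m+1) cancels
   the term of X_m: the alternating sum telescopes. *)
Lemma nangle_relT (k : nat) (A : nat -> Obj T)
    (alpha : forall i : nat, Hom (A i) (A i.+1))
    (alast : Hom (A k.+4) (iter k.+2 (@Sig T) (A 1%N))) :
  nangle_k k A alpha alast -> relT (coeff (chi k A)).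
Proof.
move=> [X [f [g [e [d [dl [tri1 trimid trilast _ _]]]]]]].
have partial m : (m <= k)%N -> relT (fun Z =>
    \sum_(1 <= i < m.+3) (-1) ^+ i.+1 * iso_ind (A i) Z
    + (-1) ^+ m * iso_ind (X m.+1) Z).
  elim: m => [_|m IH lt_mk].
    apply: relT_eq (relT_dist tri1) _ => Z.
    by rewrite big_nat_recr //= big_nat_recr //= big_geq //; ring.
  apply: relT_eq (relTD (IH (ltnW lt_mk))
                   (relTZ ((-1) ^+ m.+1) (relT_dist (trimid m.+1 lt_mk)))) _ => Z.
  by rewrite [in RHS]big_nat_recr //= !exprS; ring.
apply: relT_eq (relTD (partial k (leqnn k))
                 (relTZ ((-1) ^+ k.+1) (relT_dist trilast))) _ => Z.
rewrite coeff_chi (big_nat_recr k.+4) // (big_nat_recr k.+3) //=.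
by set S := \sum_(1 <= i < k.+3) _; rewrite !exprS; ring.
Qed.

Lemma RC_sub_RT (C : Obj T -> Prop) (n : nat) (s : fsum T) : RC T C n s -> RT T s.
Proof.
elim=> {s} [A alpha alast _ /nangle_relT /relT_coeff //|_||s1 s2 _ R1 _ R2|s _ R|s s' E _ R].
- apply: RT_ext (RT_gen _ _ _ _ _ _ _ (TR1_id _ HT zero_obj)) => Z.
  by rewrite !coeff_cons coeff_nil; ring.
- exact: RT_nil.
- exact: RT_cat.
- exact: RT_opp.
- exact: RT_ext R.
Qed.

Section Resolution.
Variables (t : nat) (C : Obj T -> Prop).
Hypothesis tiltC : cluster_tilting t C.
Hypothesis SigN_closedC : forall A : Obj T, C A -> C (SigN t A).

Definition orthC (m : nat) (Y : Obj T) : Prop :=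
  forall j : nat, (1 <= j <= m)%N ->
  forall W : Obj T, C W -> forall w : Hom W (SigN j Y), w = 0.

Lemma Hom_SigN_C_eq0 (A B : Obj T) (i : nat) : C A -> C B -> (1 <= i <= t - 1)%N ->
  forall w : Hom A (SigN i B), w = 0.
Proof. by case: tiltC => _ perpC _ /perpC + CB i_range w; apply. Qed.

(* Sig^(t-i) is faithful and Sig^t X lies in C, so Hom(Sig^i X, Y) embeds into
   Hom(Sig^(t-i) (Sig^i X), Sig^(t-i) Y). *)
Lemma orthC_mem (Y : Obj T) : orthC (t - 1) Y -> C Y.
Proof.
move=> oY; case: tiltC => _ _ CB; apply/CB => i /andP [i_gt0 le_it] X CX w.
have tiE : t = (t - i + i)%N by lia.
have CX' : C (SigN (t - i) (SigN i X)).
  by rewrite /SigN -iterD -tiE; exact: SigN_closedC.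
apply: (@Sigm_iter_inj (t - i)); rewrite Sigm_iter0.
by apply: oY CX' _; lia.
Qed.

Lemma orthC_approx (m : nat) (Y : Obj T) : (m < t - 1)%N -> orthC m Y ->
  exists (C0 Y' : Obj T) (p : Hom Y' C0) (f : Hom C0 Y) (r : Hom Y (Sig Y')),
    [/\ C C0, dist p f r & orthC m.+1 Y'].
Proof.
move=> lt_mt oY; case: tiltC => [[contraC _] _ _].
have [C0 [f [CC0 approx]]] := contraC Y.
have [Y' [p [r tri]]] := dist_extL f.
exists C0, Y', p, f, r; split=> //.
case=> [|[|j]] /andP [j_gt0 le_jm] W CW w //.
- have [v <-] := dist_exact (dist_rot (dist_rot tri))
    (Hom_SigN_C_eq0 (i := 1) CW CC0 ltac:(lia) (comp (- Sigm p) w)).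
  have [u <-] := approx W v CW.
  by rewrite (Defs.compA _ HT) (dist_comp_eq0 (dist_rot tri)) comp0m.
- apply: (dist_Hom_SigN_eq0 (j := j.+1) tri) => w'.
    by apply: oY CW _; lia.
  by apply: (Hom_SigN_C_eq0 CW CC0); lia.
Qed.

(* Splicing the triangles of m successive approximations gives
   [X] = [C_0] - [C_1] + ... + (-1)^(m-1) [C_(m-1)] + (-1)^m [X_m]. *)
Lemma resolution (m : nat) (X : Obj T) : (m <= t - 1)%N ->
  exists (Y : Obj T) (s : fsum T), [/\ all_in C s, orthC m Y &
    relT (fun Z => iso_ind X Z - coeff s Z - (-1) ^+ m * iso_ind Y Z)].
Proof.
elim: m => [|m IH] le_mt.
  exists X, [::]; split=> [||]; [exact: all_in_nil | by move=> j; lia |].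
  by apply: relT_eq relT0 _ => Z; rewrite coeff_nil expr0; ring.
have [Y [s [Cs oY Rs]]] := IH (ltnW le_mt).
have [C0 [Y' [p [f [r [CC0 tri oY']]]]]] := orthC_approx le_mt oY.
exists Y', (s ++ [:: ((-1) ^+ m, C0)]); split => //.
  exact: all_in_cat Cs (all_in1 CC0).
apply: relT_eq (relTD Rs (relTZ ((-1) ^+ m) (relT_dist tri))) _ => Z.
by rewrite coeff_cat coeff_cons coeff_nil exprS; ring.
Qed.

Lemma obj_K0T_eq_C (X : Obj T) :
  exists s : fsum T, all_in C s /\ relT (fun Z => iso_ind X Z - coeff s Z).
Proof.
have [Y [s [Cs /orthC_mem CY Rs]]] := resolution X (leqnn (t - 1)).
exists (s ++ [:: ((-1) ^+ (t - 1), Y)]); split; first exact: all_in_cat Cs (all_in1 CY).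
by apply: relT_eq Rs _ => Z; rewrite coeff_cat coeff_cons coeff_nil; ring.
Qed.

Lemma K0T_eq_C (u : fsum T) : exists s : fsum T, all_in C s /\ K0T_eq u s.
Proof.
suff [s [Cs Rs]] : exists s, all_in C s /\ relT (fun Z => coeff u Z - coeff s Z).
  exists s; split=> //; apply/relT_coeff; apply: relT_eq Rs _ => Z.
  by rewrite coeff_cat coeff_fneg.
elim: u => [|[c X] u [s [Cs Rs]]].
  exists [::]; split; first exact: all_in_nil.
  by apply: relT_eq relT0 _ => Z; rewrite coeff_nil subrr.
have [sX [CsX RsX]] := obj_K0T_eq_C X.
exists (fscale c sX ++ s); split; first exact: all_in_cat (all_in_fscale CsX) Cs.
apply: relT_eq (relTD (relTZ c RsX) Rs) _ => Z.
by rewrite coeff_cat coeff_fscale coeff_cons; ring.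
Qed.

End Resolution.
End Triangulated.

Theorem theorem3p1 (T : TriData) (HT : is_triangulated T) (n : nat)
  (C : Obj T -> Prop) (hn : (4 <= n)%N)
  (HC : cluster_tilting (n - 2) C)
  (HS : forall A : Obj T, C A -> C (SigN (n - 2) A)) :
  (forall s s' : fsum T, all_in C s -> all_in C s' ->
     K0C_eq C n s s' -> K0T_eq s s') /\
  (forall t : fsum T, exists s : fsum T, all_in C s /\ K0T_eq t s).
Proof.
split; first by move=> s s' _ _; apply: RC_sub_RT.
exact: K0T_eq_C HC HS.
Qed.
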